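(* For all positive integers $l,m,n$, the multigraph $K_{m,n}^l$ is an abelian $G$-graph.
   Context: $K_{m,n}^l$ is the loopless multigraph with vertex set partitioned into a part of $m$ vertices and a part of $n$ vertices, in which every vertex of the first part is joined to every vertex of the second part by exactly $l$ parallel edges, and there are no other edges. For a group $G$ and a multiset $S$ of elements of $G$, $\Phi(G,S)$ is the multigraph whose vertex set is the union over the members $s$ of $S$ (with multiplicity) of $V_s=\{\langle s\rangle x: x\in G\}$ (right cosets), with, for $\langle s\rangle x\in V_s$, $\langle t\rangle y\in V_t$, $s,t$ distinct members of $S$, one edge labeled $g$ between them for each $g\in\langle s\rangle x\cap\langle t\rangle y$, and no other edges. An abelian $G$-graph is a multigraph isomorphic (ignoring labels) to $\Phi(G,S)$ for some abelian group $G$ and multiset $S$. *)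

From mathcomp Require Import all_boot all_fingroup.
Set Implicit Arguments. Unset Strict Implicit. Unset Printing Implicit Defensive.
Import GroupScope.

(* A finite loopless multigraph is given by a finite vertex type V and an
   edge-multiplicity function mult : V -> V -> nat (mult u v = number of
   edges between u and v). *)

Definition mg_iso (V1 V2 : finType) (m1 : V1 -> V1 -> nat) (m2 : V2 -> V2 -> nat) :=
  exists f : V1 -> V2, bijective f /\ forall u v, m2 (f u) (f v) = m1 u v.

Definition Kmnl_mult (l m n : nat) (u v : 'I_m + 'I_n) : nat :=
  match u, v with
  | inl _, inr _ => l
  | inr _, inl _ => l
  | _, _ => 0
  end.

Arguments Kmnl_mult : clear implicits.

(* Phi(G,S), S a multiset of size k given as a k-tuple.  The vertex set is the
   disjoint union (indexed by positions in S, i.e. with multiplicity) of the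
   sets V_s of right cosets <s>x. *)
Definition Phi_vert (gT : finGroupType) (k : nat) (S : k.-tuple gT) :=
  {p : 'I_k * {set gT} | p.2 \in rcosets <[tnth S p.1]> [set: gT]}.

Definition Phi_mult (gT : finGroupType) (k : nat) (S : k.-tuple gT)
  (u v : Phi_vert S) : nat :=
  if (val u).1 != (val v).1 then #|(val u).2 :&: (val v).2| else 0.

Definition abelian_Ggraph (V : finType) (mult : V -> V -> nat) : Prop :=
  exists (gT : finGroupType) (k : nat) (S : k.-tuple gT),
    abelian [set: gT] /\ mg_iso mult (@Phi_mult gT k S).

From mathcomp Require Import all_boot all_fingroup zmodp cyclic.
Set Implicit Arguments. Unset Strict Implicit. Unset Printing Implicit Defensive.
Import GroupScope.

(* If s and t generate a finite group G with <s><t> = G, then every coset of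
   <s> meets every coset of <t> in exactly |<s> ∩ <t>| elements, so Phi(G,[s;t])
   is K^l_{m,n} with l = |<s> ∩ <t>| and m, n the indices of <s> and <t>.  For
   an element e of order lmn, the commuting pair s = (e^m, 1), t = (e^n, e^(ln))
   of G x G has |<s>| = ln, |<t>| = lm and <s> ∩ <t> = <t^m> of order l, which
   gives indices m and n in the (abelian) group they generate. *)

Lemma inj_surj_bij (T1 T2 : finType) (f : T1 -> T2) :
  injective f -> (forall y, exists x, f x = y) -> bijective f.
Proof.
move=> f_inj f_surj; apply: inj_card_bij => //.
rewrite -(card_codom f_inj); apply/subset_leq_card/subsetP=> y _.
by have [x <-] := f_surj y; apply: codom_f.
Qed.

Lemma card_rcosetsI (gT : finGroupType) (A B : {group gT}) X Y :
  A * B = [set: gT] -> X \in rcosets A [set: gT] -> Y \in rcosets B [set: gT] ->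
  #|X :&: Y| = #|A :&: B|.
Proof.
move=> AB /rcosetsP[x _ ->] /rcosetsP[y _ ->].
have /mulsgP[a b Aa Bb xy_ab] : x * y^-1 \in A * B by rewrite AB inE.
have xA : a^-1 * x \in A :* x by rewrite mem_rcoset -mulgA mulgV mulg1 groupV.
have xB : a^-1 * x \in B :* y by rewrite mem_rcoset -mulgA xy_ab mulKg.
rewrite -(rcoset_eqP xA) -(rcoset_eqP xB) -(card_rcoset (A :&: B) (a^-1 * x)).
by apply: eq_card => z; rewrite !inE !mem_rcoset inE.
Qed.

Section PhiOfGeneratingPair.

Variables (gT : finGroupType) (s t : gT).
Hypothesis mulST : <[s]> * <[t]> = [set: gT].

Let m := #|[set: gT] : <[s]>|.
Let n := #|[set: gT] : <[t]>|.

Definition Kmnl_to_Phi (u : 'I_m + 'I_n) : Phi_vert [tuple s; t] :=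
  match u with
  | inl i => exist _ (ord0, enum_val i) (enum_valP i)
  | inr j => exist _ (ord_max, enum_val j) (enum_valP j)
  end.

Lemma Kmnl_to_Phi_inj : injective Kmnl_to_Phi.
Proof. by case=> [i|j] [i'|j'] //= [] // /enum_val_inj ->. Qed.

Lemma Kmnl_to_Phi_surj v : exists u, Kmnl_to_Phi u = v.
Proof.
case: v => [[i X] vX].
have [i0 | i1] : i = ord0 \/ i = ord_max.
  by case: i {vX} => [[|[|//]] ?]; [left | right]; apply: val_inj.
- subst i; exists (inl (enum_rank_in vX X)).
  by apply: val_inj; rewrite /= enum_rankK_in.
- subst i; exists (inr (enum_rank_in vX X)).
  by apply: val_inj; rewrite /= enum_rankK_in.
Qed.

Lemma Phi_mult_Kmnl_to_Phi u v :
  Phi_mult (Kmnl_to_Phi u) (Kmnl_to_Phi v) = Kmnl_mult #|<[s]> :&: <[t]>| m n u v.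
Proof.
rewrite /Phi_mult; case: u => [i|j]; case: v => [i'|j'] //=.
- exact: card_rcosetsI (enum_valP _) (enum_valP _).
- by rewrite setIC; apply: card_rcosetsI (enum_valP _) (enum_valP _).
Qed.

Lemma Kmnl_iso_Phi_pair :
  mg_iso (Kmnl_mult #|<[s]> :&: <[t]>| m n) (Phi_mult (S := [tuple s; t])).
Proof.
exists Kmnl_to_Phi; split; last exact: Phi_mult_Kmnl_to_Phi.
exact: inj_surj_bij Kmnl_to_Phi_inj Kmnl_to_Phi_surj.
Qed.

End PhiOfGeneratingPair.

(* Phi takes cosets in the whole group type, so <s><t> is turned into a group
   type of its own with [subg]. *)
Lemma commuting_pair_Ggraph (gT : finGroupType) (s t : gT) :
  commute s t ->
  abelian_Ggraph (Kmnl_mult #|<[s]> :&: <[t]>| #|<[t]> : <[s]>| #|<[s]> : <[t]>|).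
Proof.
move=> cst; pose K := (<[s]> <*> <[t]>)%G.
have sK : <[s]> \subset K := joing_subl _ _.
have tK : <[t]> \subset K := joing_subr _ _.
have cTS : <[t]> \subset 'C(<[s]>) := cents_cycle (esym cst).
have defK : K :=: <[s]> * <[t]> := cent_joinEr cTS.
have mulTS : <[s]> * <[t]> = <[t]> * <[s]>.
  by rewrite normC // cents_norm // centsC.
have injK := injm_subg K.
have im_cycle x : <[x]> \subset K -> subg K @* <[x]> = <[subg K x]>.
  by rewrite cycle_subG => Kx; rewrite morphim_cycle.
have <- : #|<[subg K s]> :&: <[subg K t]>| = #|<[s]> :&: <[t]>|.
  by rewrite -!im_cycle // -injmI // card_injm // subIset ?sK.
have <- : #|[subg K] : <[subg K s]>| = #|<[t]> : <[s]>|.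
  by rewrite -im_subg -im_cycle // index_injm // defK indexMg.
have <- : #|[subg K] : <[subg K t]>| = #|<[s]> : <[t]>|.
  by rewrite -im_subg -im_cycle // index_injm // defK mulTS indexMg.
exists (subg_of K), 2, [tuple subg K s; subg K t]; split.
  by rewrite -im_subg morphim_abelian // abelianY !cycle_abelian.
apply: Kmnl_iso_Phi_pair.
by rewrite -!im_cycle // -morphimMl // -defK im_subg.
Qed.

Lemma expg_pair (gT1 gT2 : finGroupType) (x : gT1) (y : gT2) k :
  (x, y) ^+ k = (x ^+ k, y ^+ k).
Proof. by elim: k => // k IHk; rewrite !expgS IHk. Qed.

Lemma order_pair (gT1 gT2 : finGroupType) (x : gT1) (y : gT2) :
  #[(x, y)] = lcmn #[x] #[y].
Proof.
have pair_eq1 k : ((x, y) ^+ k == 1) = (#[x] %| k) && (#[y] %| k).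
  by rewrite expg_pair !order_dvdn.
apply/eqP; rewrite eqn_dvd order_dvdn pair_eq1 dvdn_lcml dvdn_lcmr /=.
by rewrite dvdn_lcm -pair_eq1 expg_order.
Qed.

Section PowerPair.

Variables (gT : finGroupType) (e : gT) (l m n : nat).
Hypothesis order_e : #[e] = (l * m * n)%N.

Let lmn_gt0 : 0 < l * m * n. Proof. by rewrite -order_e order_gt0. Qed.
Let l_gt0 : 0 < l. Proof. by move: lmn_gt0; rewrite !muln_gt0 => /andP[/andP[]]. Qed.
Let m_gt0 : 0 < m. Proof. by move: lmn_gt0; rewrite !muln_gt0 => /andP[/andP[]]. Qed.
Let n_gt0 : 0 < n. Proof. by move: lmn_gt0; rewrite !muln_gt0 => /andP[/andP[]]. Qed.

Let s : gT * gT := (e ^+ m, 1).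
Let t : gT * gT := (e ^+ n, e ^+ (l * n)).

Lemma order_pair_s : #[s] = (l * n)%N.
Proof.
have m_dvd_e : m %| #[e] by rewrite order_e mulnAC dvdn_mull.
by rewrite order_pair order1 lcmn1 orderXdiv // order_e mulnAC mulnK.
Qed.

Lemma order_pair_t : #[t] = (l * m)%N.
Proof.
have n_dvd_e : n %| #[e] by rewrite order_e dvdn_mull.
have ln_dvd_e : l * n %| #[e] by rewrite order_e mulnAC dvdn_mulr.
rewrite order_pair !orderXdiv // order_e mulnK // mulnAC mulKn ?muln_gt0 ?l_gt0 //.
by apply/lcmn_idPl; apply: dvdn_mull.
Qed.

Lemma pair_tXm : t ^+ m = s ^+ n.
Proof.
rewrite !expg_pair -!expgM expg1n mulnC; congr (_, _).
by rewrite mulnAC -order_e expg_order.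
Qed.

Lemma cycle_pair_sIt : <[s]> :&: <[t]> = <[t ^+ m]>.
Proof.
have tm_s : <[t ^+ m]> \subset <[s]> by rewrite pair_tXm cycleX.
apply/eqP; rewrite eqEsubset subsetI tm_s cycleX !andbT.
apply/subsetP=> _ /setIP[/cycleP[a ->] /cycleP[b sa_tb]].
have /dvdnP[c b_cm] : m %| b.
  move/(congr1 snd): sa_tb; rewrite !expg_pair /= expg1n -expgM => /esym/eqP.
  by rewrite -order_dvdn order_e mulnAC dvdn_pmul2l ?muln_gt0 ?l_gt0.
by rewrite sa_tb b_cm mulnC expgM mem_cycle.
Qed.

Lemma card_cycle_pair_sIt : #|<[s]> :&: <[t]>| = l.
Proof.
rewrite cycle_pair_sIt -orderE orderXdiv order_pair_t ?dvdn_mull //.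
by rewrite mulnK.
Qed.

Lemma power_pair_Ggraph : abelian_Ggraph (Kmnl_mult l m n).
Proof.
have cst : commute s t.
  by apply: (congr2 pair); [apply: commuteX2 | rewrite mul1g mulg1].
have := commuting_pair_Ggraph cst.
rewrite -!divgI [<[t]> :&: _]setIC card_cycle_pair_sIt -!orderE order_pair_t order_pair_s.
by rewrite !mulKn.
Qed.

End PowerPair.

Theorem proposition6 (l m n : nat) :
  0 < l -> 0 < m -> 0 < n -> abelian_Ggraph (Kmnl_mult l m n).
Proof.
move=> l_gt0 m_gt0 n_gt0; apply: (@power_pair_Ggraph _ (Zp1 : 'I_(l * m * n).-1.+1)).
by rewrite order_Zp1 prednK // !muln_gt0 l_gt0 m_gt0.
Qed.
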